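(* Let $X=\{x_1,\dots,x_M\}\subset\mathbb{R}^n$ be finite and $\phi_1,\dots,\phi_N$ real functions on $X$ such that $V$, $V_{i,j}=\phi_j(x_i)$, has rank $N$. For every $w\in\mathbb{R}^M_{\geq0}$ at which $E$ is defined (i.e. $\det G(w)>0$) and every $u\in\mathbb{R}^M$, $$u^t\,\mathrm{Hess}\,E(w)\,u=0\iff \sum_{i=1}^M u_i\,\phi_h(x_i)\phi_k(x_i)=0\ \text{ for all } h,k\in\{1,\dots,N\},$$ i.e. if and only if $V(\Phi^2;X)^tu=0$, where $V(\Phi^2;X)$ is the matrix whose columns are the values at $x_1,\dots,x_M$ of a basis of $\Phi^2=\operatorname{span}\{\phi_h\phi_k\}$.
   Context: $G(w)=V^t\operatorname{diag}(w)V$ and $E(w)=-\frac1N\log\det G(w)+\|w\|_1$ for $w$ with $\det G(w)>0$. *)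

From HB Require Import structures.
From mathcomp Require Import all_boot all_order all_algebra.
From mathcomp Require Import all_classical all_reals all_analysis.
Set Implicit Arguments. Unset Strict Implicit. Unset Printing Implicit Defensive.
Import Order.TTheory GRing.Theory Num.Theory.
Local Open Scope ring_scope.

Section Defs.
Variables (R : realType) (M N : nat).

Definition Gmat (V : 'M[R]_(M, N)) (w : 'rV[R]_M) : 'M[R]_N :=
  V^T *m diag_mx w *m V.

(* E(w) = -(1/N) log det G(w) + ||w||_1, where on the nonnegative orthant
   ||w||_1 = \sum_i w_i. *)
Definition Efun (V : 'M[R]_(M, N)) (w : 'rV[R]_M) : R :=
  - (N%:R)^-1 * ln (\det (Gmat V w)) + \sum_(i < M) w ord0 i.

Definition evec (j : 'I_M) : 'rV[R]_M := delta_mx ord0 j.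

Definition partial (j : 'I_M) (f : 'rV[R]_M -> R) (w : 'rV[R]_M) : R :=
  derive1 (fun t : R => f (w + t *: evec j)) 0.

Definition hessian (f : 'rV[R]_M -> R) (w : 'rV[R]_M) : 'M[R]_M :=
  \matrix_(i, j) partial i (partial j f) w.

Definition hess_form (f : 'rV[R]_M -> R) (w u : 'rV[R]_M) : R :=
  (u *m hessian f w *m u^T) ord0 ord0.

End Defs.

From mathcomp Require Import all_boot all_order all_algebra.
From mathcomp Require Import all_classical all_reals all_analysis.
From mathcomp Require Import ring.
Set Implicit Arguments. Unset Strict Implicit. Unset Printing Implicit Defensive.
Import Order.TTheory GRing.Theory Num.Theory numFieldNormedType.Exports.
Local Open Scope ring_scope.
Local Open Scope classical_set_scope.

(* Write Q = V G(w)^-1 V^t.  By the matrix determinant lemma and the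
   Sherman-Morrison formula, moving w along the i-th coordinate multiplies
   det G by 1 + t Q_ii and changes Q by a rank-one term; hence
   d_j E = 1 - Q_jj / N and d_i d_j E = Q_ij^2 / N, so that
   u^t Hess E(w) u = (1/N) sum_ij u_i u_j Q_ij^2.
   With D = diag(sqrt w) and Y = V G^-1 V^t D one has Q = Y Y^t, and the
   double sum is the squared Frobenius norm of S = Y^t diag(u) Y.  For
   A = V^t diag(u) V, S is A conjugated by D V G^-1 and conversely
   A = V^t D S D V (as G = V^t D D V), so S = 0 iff A = 0; the entries of A
   are the sums sum_i u_i phi_h(x_i) phi_k(x_i). *)

Lemma det_1Dmx_rank1 (R : comPzRingType) (n : nat) (x : 'cV[R]_n) (y : 'rV[R]_n) :
  \det (1%:M + x *m y) = 1 + (y *m x) 0 0.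
Proof.
pose L : 'M[R]_(n + 1) := block_mx 1%:M 0 y 1%:M.
pose U : 'M[R]_(n + 1) := block_mx 1%:M 0 (- y) 1%:M.
have LAU : L *m block_mx (1%:M + x *m y) x 0 1%:M *m U =
           block_mx 1%:M x 0 (1%:M + y *m x).
  rewrite !mulmx_block !(mul1mx, mulmx1, mul0mx, mulmx0, addr0, add0r).
  rewrite !(mulmxDr, mulmxDl, mulmxN, mulNmx, mulmxA, mul1mx, mulmx1).
  congr block_mx; first by rewrite addrK.
    by rewrite [LHS]addrC addrA subrK addNr.
  by rewrite addrC.
have := congr1 determinant LAU.
rewrite !det_mulmx !det_lblock det_ublock det_ublock !det1 !mul1r !mulr1 => ->.
by rewrite det_mx11 !mxE.
Qed.

Lemma det_rank1_update (R : comUnitRingType) (n : nat) (G : 'M[R]_n) (r : 'rV[R]_n) (t : R) :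
  G \in unitmx ->
  \det (G + t *: (r^T *m r)) = \det G * (1 + t * (r *m invmx G *m r^T) 0 0).
Proof.
move=> G_unit.
have -> : G + t *: (r^T *m r) = G *m (1%:M + (t *: (invmx G *m r^T)) *m r).
  by rewrite mulmxDr mulmx1 -scalemxAl -scalemxAr !mulmxA mulmxV // mul1mx.
by rewrite det_mulmx det_1Dmx_rank1 -scalemxAr mxE mulmxA.
Qed.

Lemma invmx_rank1_update (R : fieldType) (n : nat) (G : 'M[R]_n) (r : 'rV[R]_n) (t : R) :
  G \in unitmx -> 1 + t * (r *m invmx G *m r^T) 0 0 != 0 ->
  invmx (G + t *: (r^T *m r)) =
  invmx G - (t / (1 + t * (r *m invmx G *m r^T) 0 0)) *:
     (invmx G *m r^T *m r *m invmx G).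
Proof.
set P := invmx G; set q := (r *m P *m r^T) 0 0; set c := t / (1 + t * q).
move=> G_unit q_nz.
have rPr : r *m P *m r^T = q%:M by rewrite {1}[r *m _ *m _]mx11_scalar.
have GP : G *m P = 1%:M by rewrite mulmxV.
have rrPrrP : r^T *m r *m P *m r^T *m r *m P = q *: (r^T *m r *m P).
  rewrite -[r^T *m r *m P]mulmxA -[r^T *m (r *m P) *m r^T]mulmxA rPr.
  by rewrite mul_mx_scalar -!scalemxAl mulmxA.
have c_eq : t - c * t * q - c = 0 by rewrite /c; field.
set X := P - c *: _.
have AX : (G + t *: (r^T *m r)) *m X = 1%:M.
  rewrite /X mulmxDl !mulmxBr GP -!scalemxAr !mulmxA GP mul1mx -!scalemxAl.
  rewrite rrPrrP !scalerA -addrA -scalerBl [X in _ + X]addrC -scalerBl.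
  by rewrite c_eq scale0r addr0.
have [A_unit _] := mulmx1_unit AX.
by rewrite -[X]mul1mx -(mulVmx A_unit) -mulmxA AX mulmx1.
Qed.

Lemma det_gt0_unitmx (R : numFieldType) (n : nat) (A : 'M[R]_n) :
  0 < \det A -> A \in unitmx.
Proof. by move=> detA_gt0; rewrite unitmxE unitfE gt_eqF. Qed.

Section RankOneCalculus.
Variable R : realType.

Lemma near0_1DM_gt0 (c : R) : \forall s \near nbhs (0 : R), 0 < 1 + s * c.
Proof.
have : (1 + s * c) @[s --> nbhs (0 : R)] --> 1 + 0 * c.
  by apply: cvgD; [exact: cvg_cst | apply: cvgMl; exact: cvg_id].
by rewrite mul0r addr0 => /cvgr_gt; apply; exact: ltr01.
Qed.

Lemma is_derive0_1DM (c : R) : is_derive (0 : R) 1 (fun s => 1 + s * c) c.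
Proof.
have := is_deriveD (is_derive_cst (1 : R) (0 : R) 1)
  (is_deriveM (is_derive_id (0 : R) 1) (is_derive_cst c (0 : R) 1)).
by move/is_derive_eq; apply; rewrite scaler0 !add0r /cst /GRing.scale /= mulr1.
Qed.

Lemma derive1_ln_1DM (a b c q : R) : 0 < c ->
  derive1 (fun t => a * ln (c * (1 + t * q)) + (b + t)) 0 = a * q + 1.
Proof.
move=> c_gt0.
have c1_gt0 : 0 < c * (1 + 0 * q) by rewrite mul0r addr0 mulr1.
have := is_derive1_comp (g := fun t => c * (1 + t * q)) (is_derive1_ln c1_gt0)
  (is_deriveM (is_derive_cst c (0 : R) 1) (is_derive0_1DM q)).
move=> D_ln; have := is_deriveD (is_deriveM (is_derive_cst a (0 : R) 1) D_ln)
  (is_deriveD (is_derive_cst b (0 : R) 1) (is_derive_id (0 : R) 1)).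
move=> D; rewrite derive1E derive_val.
rewrite /cst /GRing.scale /= mul0r addr0 !mulr1 mulr0 !add0r addr0.
by rewrite mulr0 addr0 mulKf ?gt_eqF.
Qed.

Lemma derive1_div_1DM (a b c : R) :
  derive1 (fun s => a + b * (s / (1 + s * c))) 0 = b.
Proof.
have nz : 1 + 0 * c != 0 by rewrite mul0r addr0 oner_eq0.
have := is_deriveM (is_derive_id (0 : R) 1)
  (is_deriveV (f := fun s => 1 + s * c) nz (is_derive0_1DM c)).
move=> D_coef; have := is_deriveD (is_derive_cst a (0 : R) 1)
  (is_deriveM (is_derive_cst b (0 : R) 1) D_coef).
move=> D; rewrite derive1E derive_val.
by rewrite /cst /GRing.scale /= !mul0r !addr0 !add0r mulr0 addr0 invr1 !mulr1.
Qed.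

End RankOneCalculus.

Lemma sum_sqr_mx_eq0 (R : realDomainType) (m n : nat) (A : 'M[R]_(m, n)) :
  \sum_i \sum_j A i j ^+ 2 = 0 <-> A = 0.
Proof.
split=> [A_sqr0|->]; last by rewrite big1 // => i _; rewrite big1 // => j _; rewrite mxE expr0n.
apply/matrixP=> i j; rewrite mxE; apply/eqP; rewrite -sqrf_eq0; apply/eqP.
have row_sqr0 : \sum_j A i j ^+ 2 = 0.
  by apply: (psumr_eq0P _ A_sqr0) => // k _; apply: sumr_ge0 => l _; exact: sqr_ge0.
by apply: (psumr_eq0P _ row_sqr0) => // l _; exact: sqr_ge0.
Qed.

Lemma sum_weighted_sqr_gram (R : comPzRingType) (m n : nat) (Y : 'M[R]_(m, n)) (u : 'rV[R]_m) :
  \sum_i \sum_j u ord0 i * u ord0 j * (Y *m Y^T) i j ^+ 2 =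
  \sum_k \sum_l (Y^T *m diag_mx u *m Y) k l ^+ 2.
Proof.
have gramE i j : (Y *m Y^T) i j = \sum_k Y i k * Y j k.
  by rewrite mxE; apply: eq_bigr => k _; rewrite mxE.
have weightedE k l : (Y^T *m diag_mx u *m Y) k l = \sum_i u ord0 i * Y i k * Y i l.
  by rewrite mul_mx_diag mxE; apply: eq_bigr => i _; rewrite !mxE [Y i k * _]mulrC.
transitivity (\sum_i \sum_j \sum_k \sum_l
    u ord0 i * Y i k * Y i l * (u ord0 j * Y j k * Y j l)).
  apply: eq_bigr => i _; apply: eq_bigr => j _.
  rewrite gramE expr2 big_distrlr big_distrr /=; apply: eq_bigr => k _.
  by rewrite big_distrr /=; apply: eq_bigr => l _; ring.
under eq_bigr => i _ do rewrite exchange_big /=.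
under eq_bigr => i _ do under eq_bigr => k _ do rewrite exchange_big /=.
rewrite exchange_big /=; apply: eq_bigr => k _.
rewrite exchange_big /=; apply: eq_bigr => l _.
by rewrite weightedE expr2 big_distrlr.
Qed.

Lemma weighted_gram_entry (R : comPzRingType) (m n : nat) (A : 'M[R]_(m, n)) (u : 'rV[R]_m) h k :
  (A^T *m diag_mx u *m A) h k = \sum_i u ord0 i * A i h * A i k.
Proof. by rewrite mul_mx_diag mxE; apply: eq_bigr => i _; rewrite !mxE [A i h * _]mulrC. Qed.

Section GramMatrix.
Variables (R : realType) (M N : nat) (V : 'M[R]_(M, N)).

Definition Qmat (w : 'rV[R]_M) : 'M[R]_M := V *m invmx (Gmat V w) *m V^T.

Lemma Gmat_sym w : (Gmat V w)^T = Gmat V w.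
Proof. by rewrite /Gmat !trmx_mul trmxK tr_diag_mx mulmxA. Qed.

Lemma Qmat_sym w : (Qmat w)^T = Qmat w.
Proof. by rewrite /Qmat !trmx_mul trmxK trmx_inv Gmat_sym mulmxA. Qed.

Lemma Qmat_row w a b :
  (row a V *m invmx (Gmat V w) *m (row b V)^T) 0 0 = Qmat w a b.
Proof.
rewrite /Qmat !mxE; apply: eq_bigr => k _.
by rewrite -row_mul !mxE.
Qed.

Lemma diag_mx_evec (i : 'I_M) : diag_mx (evec R i) = delta_mx i i.
Proof.
apply/matrixP=> a b; rewrite !mxE eqxx /=.
by have [->|] := eqVneq a i; [rewrite eq_sym; case: (b == i) | rewrite mul0rn].
Qed.

Lemma Gmat_shift w i t :
  Gmat V (w + t *: evec R i) = Gmat V w + t *: ((row i V)^T *m row i V).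
Proof.
rewrite /Gmat linearD linearZ /= mulmxDr mulmxDl -scalemxAr -scalemxAl diag_mx_evec.
by rewrite rowE trmx_mul trmx_delta -(mul_delta_mx (0 : 'I_1)) !mulmxA.
Qed.

Lemma sum_evec_shift (w : 'rV[R]_M) (i : 'I_M) (t : R) :
  \sum_j (w + t *: evec R i) ord0 j = \sum_j w ord0 j + t.
Proof.
under eq_bigr => j _ do rewrite !mxE.
rewrite big_split /=; congr (_ + _).
rewrite (bigD1 i) //= eqxx mulr1 big1 ?addr0 // => j /negbTE ->.
by rewrite mulr0.
Qed.

Lemma det_Gmat_shift w i t : Gmat V w \in unitmx ->
  \det (Gmat V (w + t *: evec R i)) = \det (Gmat V w) * (1 + t * Qmat w i i).
Proof. by move=> G_unit; rewrite Gmat_shift det_rank1_update // Qmat_row. Qed.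

Lemma Qmat_shift w i t a b : Gmat V w \in unitmx -> 1 + t * Qmat w i i != 0 ->
  Qmat (w + t *: evec R i) a b =
  Qmat w a b - t / (1 + t * Qmat w i i) * (Qmat w a i * Qmat w i b).
Proof.
move=> G_unit q_nz.
rewrite -[LHS]Qmat_row Gmat_shift invmx_rank1_update ?Qmat_row //.
set P := invmx _; rewrite mulmxBr mulmxBl -scalemxAr -scalemxAl.
have -> : row a V *m (P *m (row i V)^T *m row i V *m P) *m (row b V)^T =
          (row a V *m P *m (row i V)^T) *m (row i V *m P *m (row b V)^T).
  by rewrite !mulmxA.
rewrite mxE Qmat_row; congr (_ + _).
rewrite mxE; congr (- _); rewrite mxE; congr (_ * _).
by rewrite mxE big_ord1 !Qmat_row.
Qed.

Lemma partial_Efun w j : 0 < \det (Gmat V w) ->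
  partial j (Efun V) w = 1 - N%:R^-1 * Qmat w j j.
Proof.
move=> detG_gt0; rewrite /partial.
have -> : (fun t => Efun V (w + t *: evec R j)) = (fun t =>
    - N%:R^-1 * ln (\det (Gmat V w) * (1 + t * Qmat w j j)) + (\sum_k w ord0 k + t)).
  by apply/funext => t; rewrite /Efun det_Gmat_shift ?det_gt0_unitmx // sum_evec_shift.
by rewrite derive1_ln_1DM // mulNr addrC.
Qed.

Lemma hessian_Efun w i j : 0 < \det (Gmat V w) ->
  hessian (Efun V) w i j = N%:R^-1 * Qmat w i j ^+ 2.
Proof.
move=> detG_gt0; rewrite mxE [partial i _ _]/partial.
have near_eq : \forall s \near nbhs (0 : R), partial j (Efun V) (w + s *: evec R i) =
    (1 - N%:R^-1 * Qmat w j j) + N%:R^-1 * (Qmat w j i * Qmat w i j) * (s / (1 + s * Qmat w i i)).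
  near=> s.
  have pos : 0 < 1 + s * Qmat w i i by near: s; exact: near0_1DM_gt0.
  have G_unit := det_gt0_unitmx detG_gt0.
  rewrite partial_Efun ?det_Gmat_shift ?mulr_gt0 // Qmat_shift ?gt_eqF //.
  by ring.
rewrite derive1E (near_eq_derive (1 : R) near_eq) -derive1E derive1_div_1DM.
by rewrite -{1}Qmat_sym mxE expr2.
Unshelve. all: by end_near.
Qed.

Lemma hess_form_Efun w u : 0 < \det (Gmat V w) ->
  hess_form (Efun V) w u =
  N%:R^-1 * \sum_i \sum_j u ord0 i * u ord0 j * Qmat w i j ^+ 2.
Proof.
move=> detG_gt0; rewrite /hess_form mxE [in RHS]exchange_big big_distrr /=.
apply: eq_bigr => j _; rewrite mxE big_distrl big_distrr /=.
by apply: eq_bigr => i _; rewrite hessian_Efun // !mxE; ring.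
Qed.

End GramMatrix.

Section WeightedGram.
Variables (R : realType) (M N : nat) (V : 'M[R]_(M, N)) (w : 'rV[R]_M).
Hypotheses (w_ge0 : forall i, 0 <= w ord0 i) (G_unit : Gmat V w \in unitmx).

Let P := invmx (Gmat V w).
Let D : 'M[R]_M := diag_mx (\row_i Num.sqrt (w ord0 i)).
Let Y := V *m P *m V^T *m D.

Let D_sqr : D *m D = diag_mx w.
Proof.
rewrite /D mul_diag_mx; apply/matrixP=> i j.
by rewrite !mxE mulrnAr -expr2 sqr_sqrtr ?w_ge0.
Qed.

Let Gmat_sqrt : Gmat V w = V^T *m D *m (D *m V).
Proof. by rewrite /Gmat -D_sqr !mulmxA. Qed.

Let P_sym : P^T = P.
Proof. by rewrite /P trmx_inv Gmat_sym. Qed.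

Let Y_tr : Y^T = D *m V *m P *m V^T.
Proof. by rewrite /Y !trmx_mul trmxK P_sym /D tr_diag_mx !mulmxA. Qed.

Let Qmat_Y : Qmat V w = Y *m Y^T.
Proof.
transitivity (V *m (P *m Gmat V w *m P) *m V^T); last by rewrite Gmat_sqrt Y_tr /Y !mulmxA.
by rewrite /P mulVmx // mul1mx.
Qed.

Let weighted_gram_Y_eq0 u :
  Y^T *m diag_mx u *m Y = 0 <-> V^T *m diag_mx u *m V = 0.
Proof.
have Y_gram : Y^T *m diag_mx u *m Y = D *m V *m P *m (V^T *m diag_mx u *m V) *m P *m V^T *m D.
  by rewrite Y_tr /Y !mulmxA.
split=> [Y0|A0]; last by rewrite Y_gram A0 mulmx0 !mul0mx.
set A := V^T *m diag_mx u *m V.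
have -> : A = V^T *m D *m (Y^T *m diag_mx u *m Y) *m (D *m V).
  transitivity (Gmat V w *m P *m A *m (P *m Gmat V w)).
    by rewrite /P mulmxV // mulVmx // mul1mx mulmx1.
  by rewrite Gmat_sqrt Y_gram !mulmxA.
by rewrite Y0 mulmx0 mul0mx.
Qed.

Lemma sum_Qmat_sqr_eq0 (u : 'rV[R]_M) :
  \sum_i \sum_j u ord0 i * u ord0 j * Qmat V w i j ^+ 2 = 0 <->
  V^T *m diag_mx u *m V = 0.
Proof.
rewrite Qmat_Y sum_weighted_sqr_gram.
exact: iff_trans (sum_sqr_mx_eq0 _) (weighted_gram_Y_eq0 u).
Qed.

End WeightedGram.

Theorem mainTheorem3 (R : realType) (n M N : nat)
    (x : 'I_M -> 'rV[R]_n) (phi : 'I_N -> 'rV[R]_n -> R) :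
  injective x ->
  \rank (\matrix_(i < M, j < N) phi j (x i)) = N ->
  forall w u : 'rV[R]_M,
    (forall i, 0 <= w ord0 i) ->
    0 < \det (Gmat (\matrix_(i < M, j < N) phi j (x i)) w) ->
    (hess_form (Efun (\matrix_(i < M, j < N) phi j (x i))) w u = 0 <->
     forall h k : 'I_N,
       \sum_(i < M) u ord0 i * phi h (x i) * phi k (x i) = 0).
Proof.
move=> _ _ w u w_ge0 detG_gt0; set V := \matrix_(i, j) phi j (x i).
rewrite hess_form_Efun //.
have [N0 | N_gt0] := posnP N.
  by subst N; split=> [_ [] | _]; last by rewrite invr0 mul0r.
have entryE h k : (V^T *m diag_mx u *m V) h k = \sum_i u ord0 i * phi h (x i) * phi k (x i).
  by rewrite weighted_gram_entry; apply: eq_bigr => i _; rewrite !mxE.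
have Ninv_neq0 : N%:R^-1 != 0 :> R by rewrite invr_eq0 pnatr_eq0 -lt0n.
apply: iff_trans (iff_trans (sum_Qmat_sqr_eq0 w_ge0 (det_gt0_unitmx detG_gt0) u) _).
  split=> [/eqP | ->]; last by rewrite mulr0.
  by rewrite mulf_eq0 (negbTE Ninv_neq0) => /eqP.
split=> [A0 h k | entries0]; first by rewrite -entryE A0 mxE.
by apply/matrixP=> h k; rewrite entryE entries0 mxE.
Qed.
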